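(* Let $(A^1,B^1)$ be an $n_1\times m_1$ bimatrix game and $(A^2,B^2)$ an $n_2\times m_2$ bimatrix game, and let $(A,B)=(A^1,B^1)\times(A^2,B^2)$ be their product game. If $(x,y)$ is a Nash equilibrium of $(A,B)$, then $(x^1,y^1)$ defined by $x^1_i=\sum_{l=1}^{n_2}x_{[i,l]}$ for $1\le i\le n_1$ and $y^1_j=\sum_{l=1}^{m_2}y_{[j,l]}$ for $1\le j\le m_1$ is a Nash equilibrium of $(A^1,B^1)$.
   Context: An $n\times m$ bimatrix game $(A,B)$ consists of two real $n\times m$ matrices. A mixed strategy of the row player is a probability vector $x\in\Delta_n=\{x\in\mathbb{R}^n_{\ge 0}:\sum_i x_i=1\}$, of the column player $y\in\Delta_m$; the expected payoffs are $x^TAy$ (row player) and $x^TBy$ (column player). $(x,y)$ is a Nash equilibrium if $x^TAy\ge \hat x^TAy$ for all $\hat x\in\Delta_n$ and $x^TBy\ge x^TB\hat y$ for all $\hat y\in\Delta_m$. For index ranges $\{1,\dots,p\}\times\{1,\dots,q\}$, the pairing $[i,j]=(i-1)q+j$ is the standard bijection onto $\{1,\dots,pq\}$. The product game $(A^1,B^1)\times(A^2,B^2)$ of an $n_1\times m_1$ game and an $n_2\times m_2$ game is the $(n_1n_2)\times(m_1m_2)$ game $(A,B)$ with $A_{[i_1,i_2],[j_1,j_2]}=A^1_{i_1j_1}+A^2_{i_2j_2}$ and $B_{[i_1,i_2],[j_1,j_2]}=B^1_{i_1j_1}+B^2_{i_2j_2}$ (rows indexed via the pairing on $\{1..n_1\}\times\{1..n_2\}$,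 columns via the pairing on $\{1..m_1\}\times\{1..m_2\}$). *)

From mathcomp Require Import all_boot all_order all_algebra.
Set Implicit Arguments. Unset Strict Implicit. Unset Printing Implicit Defensive.
Import Order.TTheory GRing.Theory Num.Theory.
Local Open Scope ring_scope.

Definition is_strategy (R : realFieldType) (n : nat) (x : 'cV[R]_n) : Prop :=
  (forall i, 0 <= x i 0) /\ \sum_(i < n) x i 0 = 1.

Definition payoff (R : realFieldType) (n m : nat) (M : 'M[R]_(n, m))
  (x : 'cV[R]_n) (y : 'cV[R]_m) : R := (x^T *m M *m y) 0 0.

Definition nash_eq (R : realFieldType) (n m : nat) (A B : 'M[R]_(n, m))
  (x : 'cV[R]_n) (y : 'cV[R]_m) : Prop :=
  is_strategy x /\ is_strategy y /\
  (forall xh : 'cV[R]_n, is_strategy xh -> payoff A xh y <= payoff A x y) /\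
  (forall yh : 'cV[R]_m, is_strategy yh -> payoff B x yh <= payoff B x y).

(* The pairing [i,j] = (i-1)q + j, in 0-based form: i*q + j. *)
Lemma pair_idx_lt (p q : nat) (i : 'I_p) (j : 'I_q) : (i * q + j < p * q)%N.
Proof.
case: i => i /= Hi; case: j => j /= Hj.
have H1 : (i * q + j < i * q + q)%N by rewrite ltn_add2l.
apply: (leq_trans H1); rewrite addnC -mulSn; exact: leq_mul.
Qed.

Definition pair_idx (p q : nat) (i : 'I_p) (j : 'I_q) : 'I_(p * q) :=
  Ordinal (pair_idx_lt i j).

(* Product game matrix: M_{[i1,i2],[j1,j2]} = M1_{i1 j1} + M2_{i2 j2}. *)
Definition prod_mx (R : realFieldType) (n1 m1 n2 m2 : nat)
  (M1 : 'M[R]_(n1, m1)) (M2 : 'M[R]_(n2, m2)) : 'M[R]_(n1 * n2, m1 * m2) :=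
  \matrix_(r, c)
    \sum_(i1 < n1) \sum_(i2 < n2) \sum_(j1 < m1) \sum_(j2 < m2)
      (if (r == pair_idx i1 i2) && (c == pair_idx j1 j2)
       then M1 i1 j1 + M2 i2 j2 else 0).

Definition marg1 (R : realFieldType) (p q : nat) (x : 'cV[R]_(p * q)) : 'cV[R]_p :=
  \col_(i < p) \sum_(l < q) x (pair_idx i l) 0.
Arguments marg1 {R} p q x.

From mathcomp Require Import all_boot all_order all_algebra.
Set Implicit Arguments. Unset Strict Implicit. Unset Printing Implicit Defensive.
Import Order.TTheory GRing.Theory Num.Theory.
Local Open Scope ring_scope.

(* The payoff of the product game at (x, y) is the sum of the payoffs of the
   factor games at the marginals of x and y.  Given a deviation xh of the row
   player in the first game, the product strategy xh (x) marg2 x has marginals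
   xh and marg2 x, so against y it changes only the first summand; since x is
   a best response in the product game, that summand cannot increase.  The
   column player is handled symmetrically. *)

Lemma sum_pair_idx (V : nmodType) (p q : nat) (F : 'I_(p * q) -> V) :
  \sum_(r < p * q) F r = \sum_(i < p) \sum_(j < q) F (pair_idx i j).
Proof.
pose G k := if insub k is Some r then F r else 0.
have GE (r : 'I_(p * q)) : G (val r) = F r by rewrite /G valK.
under eq_bigr => r _ do rewrite -GE.
rewrite -(big_mkord xpredT G) big_nat_mul big_mkord.
apply: eq_bigr => i _.
rewrite mulSn addnC -{1}(add0n (i * q)%N) big_addn addKn big_mkord.
by apply: eq_bigr => j _; rewrite -GE addnC.
Qed.

Lemma pair_idx_inj (p q : nat) (i k : 'I_p) (j l : 'I_q) :
  (pair_idx i j == pair_idx k l) = (i == k) && (j == l).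
Proof.
apply/eqP/andP => [/(congr1 val) /= E | [/eqP -> /eqP ->] //].
have q_gt0 : (0 < q)%N by apply: leq_ltn_trans (ltn_ord j).
have /= := congr1 (divn^~ q) E; rewrite !divnMDl // !divn_small // !addn0 => Ei.
have /= := congr1 (modn^~ q) E; rewrite !modnMDl !modn_small // => Ej.
by split; apply/eqP; apply: val_inj.
Qed.

Lemma sum_supported_at (V : nmodType) (I : finType) (i : I) (F : I -> V) :
  (forall k, i != k -> F k = 0) -> \sum_k F k = F i.
Proof.
by move=> F0; rewrite (bigD1 i) //= big1 ?addr0 // => k; rewrite eq_sym => /F0.
Qed.

Lemma prod_mxE (R : realFieldType) (n1 m1 n2 m2 : nat)
    (M1 : 'M[R]_(n1, m1)) (M2 : 'M[R]_(n2, m2)) i1 i2 j1 j2 :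
  prod_mx M1 M2 (pair_idx i1 i2) (pair_idx j1 j2) = M1 i1 j1 + M2 i2 j2.
Proof.
rewrite mxE (sum_supported_at (i := i1)) => [|k /negbTE ne]; last first.
  by do 3!apply: big1 => ? _; rewrite pair_idx_inj ne.
rewrite (sum_supported_at (i := i2)) => [|l /negbTE ne]; last first.
  by do 2!apply: big1 => ? _; rewrite pair_idx_inj ne andbF.
rewrite (sum_supported_at (i := j1)) => [|k /negbTE ne]; last first.
  by apply: big1 => ? _; rewrite [pair_idx j1 _ == _]pair_idx_inj ne andbF.
rewrite (sum_supported_at (i := j2)) => [|l /negbTE ne]; last first.
  by rewrite [pair_idx j1 _ == _]pair_idx_inj ne !andbF.
by rewrite !eqxx.
Qed.

Definition marg2 (R : realFieldType) (p q : nat) (x : 'cV[R]_(p * q)) : 'cV[R]_q :=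
  \col_(j < q) \sum_(i < p) x (pair_idx i j) 0.

Definition prod_col (R : realFieldType) (p q : nat) (a : 'cV[R]_p) (b : 'cV[R]_q) :
    'cV[R]_(p * q) :=
  \col_r \sum_(i < p) \sum_(j < q) (if r == pair_idx i j then a i 0 * b j 0 else 0).

Lemma prod_colE (R : realFieldType) (p q : nat) (a : 'cV[R]_p) (b : 'cV[R]_q) i j :
  prod_col a b (pair_idx i j) 0 = a i 0 * b j 0.
Proof.
rewrite mxE (sum_supported_at (i := i)) => [|k /negbTE ne]; last first.
  by apply: big1 => ? _; rewrite pair_idx_inj ne.
rewrite (sum_supported_at (i := j)) => [|l /negbTE ne]; last first.
  by rewrite pair_idx_inj ne andbF.
by rewrite eqxx.
Qed.

Lemma payoffE (R : realFieldType) (n m : nat) (M : 'M[R]_(n, m)) x y :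
  payoff M x y = \sum_i \sum_j x i 0 * M i j * y j 0.
Proof.
rewrite /payoff mxE exchange_big /=.
apply: eq_bigr => j _; rewrite mxE mulr_suml; apply: eq_bigr => i _.
by rewrite mxE.
Qed.

Lemma sum_mul_marginals (R : comPzSemiRingType) (n1 n2 m1 m2 : nat)
    (a : 'I_n1 -> 'I_n2 -> R) (f : 'I_n1 -> 'I_m1 -> R) (b : 'I_m1 -> 'I_m2 -> R) :
  \sum_i \sum_k \sum_j \sum_l a i k * f i j * b j l =
  \sum_i \sum_j (\sum_k a i k) * f i j * (\sum_l b j l).
Proof.
apply: eq_bigr => i _; rewrite exchange_big; apply: eq_bigr => j _.
rewrite !mulr_suml; apply: eq_bigr => k _.
by rewrite mulr_sumr.
Qed.

Lemma payoff_prod_mx (R : realFieldType) (n1 m1 n2 m2 : nat)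
    (M1 : 'M[R]_(n1, m1)) (M2 : 'M[R]_(n2, m2)) x y :
  payoff (prod_mx M1 M2) x y =
  payoff M1 (marg1 n1 n2 x) (marg1 m1 m2 y) + payoff M2 (marg2 x) (marg2 y).
Proof.
rewrite !payoffE sum_pair_idx.
under eq_bigr => i1 _ do under eq_bigr => i2 _ do
  (rewrite sum_pair_idx; under eq_bigr => j1 _ do under eq_bigr => j2 _ do
     rewrite prod_mxE mulrDr mulrDl).
under eq_bigr => ? _ do under eq_bigr => ? _ do under eq_bigr => ? _ do
  rewrite big_split.
under eq_bigr => ? _ do under eq_bigr => ? _ do rewrite big_split.
under eq_bigr => ? _ do rewrite big_split.
rewrite big_split /=.
congr (_ + _).
  rewrite sum_mul_marginals; apply: eq_bigr => i1 _; apply: eq_bigr => j1 _.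
  by rewrite !mxE.
under eq_bigr => i1 _ do under eq_bigr => i2 _ do rewrite exchange_big.
rewrite exchange_big sum_mul_marginals; apply: eq_bigr => i2 _; apply: eq_bigr => j2 _.
by rewrite !mxE.
Qed.

Lemma marg1_strategy (R : realFieldType) (p q : nat) (x : 'cV[R]_(p * q)) :
  is_strategy x -> is_strategy (marg1 p q x).
Proof.
move=> [x_ge0 x_sum1]; split=> [i|]; first by rewrite mxE sumr_ge0.
by rewrite -x_sum1 sum_pair_idx; apply: eq_bigr => i _; rewrite mxE.
Qed.

Lemma marg2_strategy (R : realFieldType) (p q : nat) (x : 'cV[R]_(p * q)) :
  is_strategy x -> is_strategy (marg2 x).
Proof.
move=> [x_ge0 x_sum1]; split=> [j|]; first by rewrite mxE sumr_ge0.
by rewrite -x_sum1 sum_pair_idx exchange_big; apply: eq_bigr => j _; rewrite mxE.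
Qed.

Lemma prod_col_strategy (R : realFieldType) (p q : nat) (a : 'cV[R]_p) (b : 'cV[R]_q) :
  is_strategy a -> is_strategy b -> is_strategy (prod_col a b).
Proof.
move=> [a_ge0 a_sum1] [b_ge0 b_sum1]; split=> [r|].
  rewrite mxE; do 2!apply: sumr_ge0 => ? _.
  by case: ifP => // _; exact: mulr_ge0 (a_ge0 _) (b_ge0 _).
rewrite sum_pair_idx -{}a_sum1; apply: eq_bigr => i _.
by under eq_bigr => j _ do rewrite prod_colE; rewrite -mulr_sumr b_sum1 mulr1.
Qed.

Lemma marg1_prod_col (R : realFieldType) (p q : nat) (a : 'cV[R]_p) (b : 'cV[R]_q) :
  \sum_j b j 0 = 1 -> marg1 p q (prod_col a b) = a.
Proof.
move=> b_sum1; apply/matrixP => i k; rewrite ord1 mxE.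
by under eq_bigr => j _ do rewrite prod_colE; rewrite -mulr_sumr b_sum1 mulr1.
Qed.

Lemma marg2_prod_col (R : realFieldType) (p q : nat) (a : 'cV[R]_p) (b : 'cV[R]_q) :
  \sum_i a i 0 = 1 -> marg2 (prod_col a b) = b.
Proof.
move=> a_sum1; apply/matrixP => j k; rewrite ord1 mxE.
by under eq_bigr => i _ do rewrite prod_colE; rewrite -mulr_suml a_sum1 mul1r.
Qed.

Theorem theorem3 (R : realFieldType) (n1 m1 n2 m2 : nat)
  (A1 B1 : 'M[R]_(n1, m1)) (A2 B2 : 'M[R]_(n2, m2))
  (x : 'cV[R]_(n1 * n2)) (y : 'cV[R]_(m1 * m2)) :
  nash_eq (prod_mx A1 A2) (prod_mx B1 B2) x y ->
  nash_eq A1 B1 (marg1 n1 n2 x) (marg1 m1 m2 y).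
Proof.
move=> [sx [sy [x_best y_best]]].
have [sx2 sy2] := (marg2_strategy sx, marg2_strategy sy).
do 2!(split; first exact: marg1_strategy); split.
- move=> xh sxh; have := x_best _ (prod_col_strategy sxh sx2).
  by rewrite !payoff_prod_mx marg1_prod_col ?marg2_prod_col ?sx2.2 ?sxh.2 // lerD2r.
- move=> yh syh; have := y_best _ (prod_col_strategy syh sy2).
  by rewrite !payoff_prod_mx marg1_prod_col ?marg2_prod_col ?sy2.2 ?syh.2 // lerD2r.
Qed.
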